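(* Let $m\ge2$ and let $\mathcal{C}\in\mathbb{S}_{m,n}$ be the symmetric Cauchy tensor with generating vector $c=(c_1,\dots,c_n)^T$, where $c>0$. The following are equivalent: (i) $c_1,\dots,c_n$ are mutually distinct; (ii) $\mathcal{C}$ is strongly doubly nonnegative; (iii) $\mathcal{C}$ is strongly completely positive.
   Context: The symmetric Cauchy tensor with generating vector $c$ has entries $1/(c_{i_1}+\dots+c_{i_m})$. $(\mathcal{A}x^{m-1})_i=\sum_{i_2,\dots,i_m}a_{ii_2\ldots i_m}x_{i_2}\cdots x_{i_m}$; an H-eigenvalue is $\lambda\in\mathbb{R}$ with $\mathcal{A}x^{m-1}=\lambda(x_i^{m-1})_i$ for some nonzero $x\in\mathbb{R}^n$. Strongly doubly nonnegative: all entries nonnegative and all H-eigenvalues positive. Strongly completely positive: $\mathcal{A}=\sum_{k=1}^r(u^{(k)})^m$ with $u^{(k)}\in\mathbb{R}^n_+$ and $\mathrm{span}\{u^{(1)},\dots,u^{(r)}\}=\mathbb{R}^n$, where $(u^m)_{i_1\ldots i_m}=u_{i_1}\cdots u_{i_m}$. *)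

From Stdlib Require Import Reals List Lra.
Import ListNotations.
Open Scope R_scope.

(* A tensor of order m and dimension n is a function on index lists
   [i1; ...; im] (length m, entries < n). *)
Definition tensor := list nat -> R.

Definition rsum (n : nat) (f : nat -> R) : R :=
  fold_right Rplus 0 (map f (seq 0 n)).

Definition rprod (f : nat -> R) (idx : list nat) : R :=
  fold_right Rmult 1 (map f idx).

Fixpoint sum_tuples (n k : nat) (F : list nat -> R) : R :=
  match k with
  | O => F nil
  | S k' => rsum n (fun j => sum_tuples n k' (fun l => F (j :: l)))
  end.

Definition valid_index (m n : nat) (idx : list nat) : Prop :=
  length idx = m /\ Forall (fun i => (i < n)%nat) idx.

Definition cauchy_tensor (c : nat -> R) : tensor :=
  fun idx => / fold_right Rplus 0 (map c idx).

(* (A x^{m-1})_i = sum_{i2..im} a_{i i2 .. im} x_{i2} ... x_{im} *)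
Definition tensor_apply (m n : nat) (A : tensor) (x : nat -> R) (i : nat) : R :=
  sum_tuples n (m - 1) (fun l => A (i :: l) * rprod x l).

Definition H_eigenvalue (m n : nat) (A : tensor) (lam : R) : Prop :=
  exists x : nat -> R,
    (exists i, (i < n)%nat /\ x i <> 0) /\
    forall i, (i < n)%nat -> tensor_apply m n A x i = lam * x i ^ (m - 1).

Definition strongly_doubly_nonnegative (m n : nat) (A : tensor) : Prop :=
  (forall idx, valid_index m n idx -> 0 <= A idx) /\
  (forall lam, H_eigenvalue m n A lam -> 0 < lam).

(* A = sum_{k<r} (u^(k))^m with u^(k) in R^n_+ spanning R^n *)
Definition strongly_completely_positive (m n : nat) (A : tensor) : Prop :=
  exists (r : nat) (u : nat -> nat -> R),
    (forall k i, (k < r)%nat -> (i < n)%nat -> 0 <= u k i) /\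
    (forall idx, valid_index m n idx ->
       A idx = rsum r (fun k => rprod (u k) idx)) /\
    (forall y : nat -> R, exists a : nat -> R,
       forall i, (i < n)%nat -> y i = rsum r (fun k => a k * u k i)).

From Stdlib Require Import Reals List Lra Lia Classical ClassicalEpsilon.
From mathcomp Require all_boot all_algebra Rstruct.
Import ListNotations.
Open Scope R_scope.

(* (iii) => (ii): if A = sum_k u_k^m, contracting the eigen-equation with x gives
   sum_k (u_k . x)^m = lam * sum_i x_i^m, and since the u_k span R^n some u_k . x
   is nonzero; for even m this gives lam > 0, for odd m the eigen-equation itself has
   nonnegative terms.
   (ii) => (i): if c_i = c_j, then e_i - e_j is an H-eigenvector for the eigenvalue 0.
   (i) => (iii): the entries of C are 1/s for finitely many distinct s > 0, and
   1/s = int_{-oo}^0 exp (s z) dz.  A Riemann sum with positive weights approximates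
   this integral from below up to an error that is small compared with the weights d
   it leaves out at p nodes; since the generalized Vandermonde matrix
   [exp (s_i z_j)] is nonsingular (a Descartes rule for exponential sums), perturbing
   those weights makes the representation 1/s = sum_k w_k exp (s z_k) exact with all
   w_k > 0.  Then C = sum_k (w_k^(1/m) exp (c z_k))^m, and the vectors exp (c z_j)
   at n of the nodes span R^n for the same Vandermonde reason. *)

Lemma fold_Rplus_app l1 l2 :
  fold_right Rplus 0 (l1 ++ l2) = fold_right Rplus 0 l1 + fold_right Rplus 0 l2.
Proof. induction l1 as [|x l1 IH]; simpl; [lra | rewrite IH; lra]. Qed.

Lemma rsum_S n f : rsum (S n) f = rsum n f + f n.
Proof. unfold rsum. rewrite seq_S, map_app, fold_Rplus_app. simpl. lra. Qed.

Lemma rsum_shift n f : rsum (S n) f = f 0%nat + rsum n (fun i => f (S i)).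
Proof. unfold rsum. simpl. rewrite <- seq_shift, map_map. reflexivity. Qed.

Lemma rsum_ext n f g : (forall i, (i < n)%nat -> f i = g i) -> rsum n f = rsum n g.
Proof. induction n; intros H; [reflexivity | rewrite !rsum_S, IHn, H; auto]. Qed.

Lemma rsum_plus n f g : rsum n (fun i => f i + g i) = rsum n f + rsum n g.
Proof. induction n; [unfold rsum; simpl; lra | rewrite !rsum_S, IHn; lra]. Qed.

Lemma rsum_minus n f g : rsum n (fun i => f i - g i) = rsum n f - rsum n g.
Proof. induction n; [unfold rsum; simpl; lra | rewrite !rsum_S, IHn; lra]. Qed.

Lemma rsum_scal_l n a f : rsum n (fun i => a * f i) = a * rsum n f.
Proof. induction n; [unfold rsum; simpl; lra | rewrite !rsum_S, IHn; lra]. Qed.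

Lemma rsum_scal_r n a f : rsum n (fun i => f i * a) = rsum n f * a.
Proof. induction n; [unfold rsum; simpl; lra | rewrite !rsum_S, IHn; lra]. Qed.

Lemma rsum_const n a : rsum n (fun _ => a) = INR n * a.
Proof. induction n; [unfold rsum; simpl; lra | rewrite rsum_S, IHn, S_INR; lra]. Qed.

Lemma rsum_zero n : rsum n (fun _ => 0) = 0.
Proof. rewrite rsum_const. lra. Qed.

Lemma rsum_exchange n r (f : nat -> nat -> R) :
  rsum n (fun i => rsum r (fun k => f i k)) = rsum r (fun k => rsum n (fun i => f i k)).
Proof.
  induction n.
  - symmetry. apply rsum_zero.
  - rewrite rsum_S, IHn, <- rsum_plus. apply rsum_ext. intros. rewrite rsum_S. lra.
Qed.

Lemma rsum_app a b f : rsum (a + b) f = rsum a f + rsum b (fun k => f (a + k)%nat).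
Proof.
  induction b.
  - rewrite Nat.add_0_r. unfold rsum at 3. simpl. lra.
  - rewrite Nat.add_succ_r, !rsum_S, IHb. lra.
Qed.

Lemma rsum_le n f g : (forall i, (i < n)%nat -> f i <= g i) -> rsum n f <= rsum n g.
Proof.
  induction n; intros H; [unfold rsum; simpl; lra|].
  rewrite !rsum_S. pose proof (H n ltac:(lia)). pose proof (IHn ltac:(auto)). lra.
Qed.

Lemma rsum_nonneg n f : (forall i, (i < n)%nat -> 0 <= f i) -> 0 <= rsum n f.
Proof. intros H. rewrite <- (rsum_zero n). apply rsum_le. exact H. Qed.

Lemma rsum_term_le n f i :
  (forall i, (i < n)%nat -> 0 <= f i) -> (i < n)%nat -> f i <= rsum n f.
Proof.
  induction n; intros H Hi; [lia|]. rewrite rsum_S.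
  assert (0 <= rsum n f) by (apply rsum_nonneg; auto).
  destruct (Nat.eq_dec i n) as [->|Hne]; [lra|].
  pose proof (IHn ltac:(auto) ltac:(lia)). pose proof (H n ltac:(lia)). lra.
Qed.

Lemma rsum_pos n f i :
  (forall i, (i < n)%nat -> 0 <= f i) -> (i < n)%nat -> 0 < f i -> 0 < rsum n f.
Proof. intros H Hi Hfi. pose proof (rsum_term_le n f i H Hi). lra. Qed.

Lemma rsum_eq0_nonneg n f :
  (forall i, (i < n)%nat -> 0 <= f i) -> rsum n f = 0 -> forall i, (i < n)%nat -> f i = 0.
Proof. intros H H0 i Hi. pose proof (rsum_term_le n f i H Hi). pose proof (H i Hi). lra. Qed.

Lemma rsum_abs n f : Rabs (rsum n f) <= rsum n (fun i => Rabs (f i)).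
Proof.
  induction n; [unfold rsum; simpl; rewrite Rabs_R0; lra|].
  rewrite !rsum_S. pose proof (Rabs_triang (rsum n f) (f n)). lra.
Qed.

Definition unit_vec (i t : nat) : R := if Nat.eqb i t then 1 else 0.

Lemma rsum_unit_vec n g i : (i < n)%nat -> rsum n (fun t => g t * unit_vec i t) = g i.
Proof.
  induction n; intros Hi; [lia|]. rewrite rsum_S. unfold unit_vec at 2.
  destruct (Nat.eqb_spec i n) as [->|Hne].
  - rewrite (rsum_ext n _ (fun _ => 0)), rsum_zero; [lra|].
    intros t Ht. unfold unit_vec. destruct (Nat.eqb_spec n t); [lia | lra].
  - rewrite IHn by lia. lra.
Qed.

Lemma rsum_telescope n f : rsum n (fun k => f (S k) - f k) = f n - f 0%nat.
Proof. induction n; [unfold rsum; simpl; lra | rewrite rsum_S, IHn; lra]. Qed.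

Lemma sum_tuples_ext n k F G :
  (forall l, length l = k -> Forall (fun i => (i < n)%nat) l -> F l = G l) ->
  sum_tuples n k F = sum_tuples n k G.
Proof.
  revert F G; induction k; intros F G H; simpl; [apply H; auto|].
  apply rsum_ext. intros j Hj. apply IHk. intros l Hl Hf. apply H; simpl; auto.
Qed.

Lemma sum_tuples_rsum n r k (F : nat -> list nat -> R) :
  sum_tuples n k (fun l => rsum r (fun t => F t l)) = rsum r (fun t => sum_tuples n k (F t)).
Proof.
  revert F; induction k; intros F; simpl; [reflexivity|].
  rewrite (rsum_ext n _ (fun j => rsum r (fun t => sum_tuples n k (fun l => F t (j :: l))))).
  - apply rsum_exchange.
  - intros j _. apply (IHk (fun t l => F t (j :: l))).
Qed.

Lemma sum_tuples_scal n k a F : sum_tuples n k (fun l => a * F l) = a * sum_tuples n k F.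
Proof.
  revert F; induction k; intros F; simpl; [reflexivity|].
  rewrite <- rsum_scal_l. apply rsum_ext. intros. apply (IHk (fun l => F (i :: l))).
Qed.

Lemma sum_tuples_rprod n k f : sum_tuples n k (rprod f) = rsum n f ^ k.
Proof.
  induction k; simpl; [reflexivity|].
  rewrite <- IHk, <- rsum_scal_r. apply rsum_ext. intros j _.
  rewrite <- sum_tuples_scal. reflexivity.
Qed.

Lemma rprod_mult f g l : rprod f l * rprod g l = rprod (fun j => f j * g j) l.
Proof. induction l; unfold rprod in *; simpl; [lra | rewrite <- IHl; lra]. Qed.

Lemma rprod_neq0_In f l t : rprod f l <> 0 -> In t l -> f t <> 0.
Proof.
  induction l; unfold rprod in *; simpl; intros H Hin; [contradiction|].
  destruct Hin as [<-|Hin]; intro E; apply H; [rewrite E; lra|].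
  exfalso. apply IHl; auto. intro E'. apply H. rewrite E'. lra.
Qed.

Lemma rprod_nonneg f l : Forall (fun t => 0 <= f t) l -> 0 <= rprod f l.
Proof. induction 1; unfold rprod in *; simpl; [lra | apply Rmult_le_pos; auto]. Qed.

Definition index_sum (c : nat -> R) (idx : list nat) : R := fold_right Rplus 0 (map c idx).

Lemma index_sum_const (c : nat -> R) a l :
  (forall t, In t l -> c t = a) -> index_sum c l = INR (length l) * a.
Proof.
  unfold index_sum. induction l as [|x l IH]; intros H; [simpl; lra|].
  change (length (x :: l)) with (S (length l)). rewrite S_INR. simpl.
  rewrite IH, (H x); [lra | left; reflexivity | intros t Ht; apply H; right; exact Ht].
Qed.

(** * Strongly completely positive tensors are strongly doubly nonnegative *)

Definition dot (n : nat) (u x : nat -> R) : R := rsum n (fun j => u j * x j).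

Lemma tensor_apply_rank_one_sum m n A r u x i : (1 <= m)%nat ->
  (forall idx, valid_index m n idx -> A idx = rsum r (fun k => rprod (u k) idx)) ->
  (i < n)%nat ->
  tensor_apply m n A x i = rsum r (fun k => u k i * dot n (u k) x ^ (m - 1)).
Proof.
  intros hm HA Hi. unfold tensor_apply.
  rewrite (sum_tuples_ext n (m - 1) _
             (fun l => rsum r (fun k => u k i * rprod (fun j => u k j * x j) l))).
  - rewrite sum_tuples_rsum. apply rsum_ext. intros k _.
    rewrite sum_tuples_scal, sum_tuples_rprod. reflexivity.
  - intros l Hl Hf. rewrite HA by (split; [simpl; lia | constructor; auto]).
    rewrite <- rsum_scal_r. apply rsum_ext. intros k _.
    rewrite <- rprod_mult. unfold rprod. simpl. lra.
Qed.

Lemma spanning_dot_neq0 n r (u : nat -> nat -> R) x i0 :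
  (forall y : nat -> R, exists a : nat -> R,
     forall i, (i < n)%nat -> y i = rsum r (fun k => a k * u k i)) ->
  (i0 < n)%nat -> x i0 <> 0 ->
  exists k, (k < r)%nat /\ dot n (u k) x <> 0.
Proof.
  intros Hspan Hi0 Hx0.
  destruct (classic (exists k, (k < r)%nat /\ dot n (u k) x <> 0)) as [H|H]; [exact H|].
  exfalso. destruct (Hspan x) as [a Ha].
  (* |x|^2 = <x, sum_k a_k u_k> = sum_k a_k <u_k, x> = 0 *)
  assert (E : rsum n (fun i => x i * x i) = rsum r (fun k => a k * dot n (u k) x)).
  { rewrite (rsum_ext n _ (fun i => rsum r (fun k => x i * (a k * u k i)))).
    - rewrite rsum_exchange. apply rsum_ext. intros k _. unfold dot.
      rewrite <- rsum_scal_l. apply rsum_ext. intros. lra.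
    - intros i Hi. rewrite rsum_scal_l, <- Ha by auto. reflexivity. }
  rewrite (rsum_ext r _ (fun _ => 0)), rsum_zero in E.
  - assert (0 < rsum n (fun i => x i * x i)).
    { apply (rsum_pos n _ i0); auto; intros; nra. }
    lra.
  - intros k Hk. destruct (Req_dec (dot n (u k) x) 0) as [->|Hne]; [lra|].
    exfalso. apply H. eauto.
Qed.

Lemma pow_even_nonneg x k : Nat.Even k -> 0 <= x ^ k.
Proof. intros [q ->]. rewrite pow_mult. apply pow_le. nra. Qed.

Lemma pow_even_pos x k : Nat.Even k -> x <> 0 -> 0 < x ^ k.
Proof. intros [q ->] H. rewrite pow_mult. apply pow_lt. nra. Qed.

Lemma pow_pred_mult x m : (1 <= m)%nat -> x ^ m = x * x ^ (m - 1).
Proof. intros Hm. destruct m as [|m]; [lia|]. simpl. rewrite Nat.sub_0_r. reflexivity. Qed.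

Section RankOneEigen.

Variables (m n r : nat) (u : nat -> nat -> R) (x : nat -> R) (lam : R).
Hypothesis hm : (2 <= m)%nat.
Hypothesis eigen : forall i, (i < n)%nat ->
  rsum r (fun k => u k i * dot n (u k) x ^ (m - 1)) = lam * x i ^ (m - 1).

Lemma rank_one_eigen_energy :
  rsum r (fun k => dot n (u k) x ^ m) = lam * rsum n (fun i => x i ^ m).
Proof.
  rewrite <- rsum_scal_l.
  rewrite (rsum_ext n _ (fun i => rsum r (fun k => x i * (u k i * dot n (u k) x ^ (m - 1))))).
  - rewrite rsum_exchange. apply rsum_ext. intros k _.
    rewrite (rsum_ext n _ (fun i => u k i * x i * dot n (u k) x ^ (m - 1))) by (intros; lra).
    rewrite rsum_scal_r, (pow_pred_mult _ m) by lia. reflexivity.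
  - intros i Hi. rewrite rsum_scal_l, eigen, (pow_pred_mult _ m) by (auto; lia). lra.
Qed.

Lemma rank_one_eigen_pos_even i0 k0 :
  Nat.Even m -> (i0 < n)%nat -> x i0 <> 0 -> (k0 < r)%nat -> dot n (u k0) x <> 0 -> 0 < lam.
Proof.
  intros Hev Hi0 Hx0 Hk0 Hd0.
  assert (0 < rsum r (fun k => dot n (u k) x ^ m)).
  { apply (rsum_pos r _ k0); auto; intros; [apply pow_even_nonneg | apply pow_even_pos]; auto. }
  assert (0 < rsum n (fun i => x i ^ m)).
  { apply (rsum_pos n _ i0); auto; intros; [apply pow_even_nonneg | apply pow_even_pos]; auto. }
  rewrite rank_one_eigen_energy in *. nra.
Qed.

(* For odd m the even power m - 1 makes every term of the eigen-equation
   nonnegative, so lam >= 0, and lam = 0 would force every u_k . x to vanish. *)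
Lemma rank_one_eigen_pos_odd i0 k0 :
  (forall k i, (k < r)%nat -> (i < n)%nat -> 0 <= u k i) ->
  Nat.Odd m -> (i0 < n)%nat -> x i0 <> 0 -> (k0 < r)%nat -> dot n (u k0) x <> 0 -> 0 < lam.
Proof.
  intros Hu Hod Hi0 Hx0 Hk0 Hd0.
  assert (Hev : Nat.Even (m - 1)) by (destruct Hod as [q Hq]; exists q; lia).
  assert (Hterm : forall i, (i < n)%nat -> forall k, (k < r)%nat ->
            0 <= u k i * dot n (u k) x ^ (m - 1)).
  { intros. apply Rmult_le_pos; [apply Hu | apply pow_even_nonneg]; auto. }
  pose proof (pow_even_pos (x i0) (m - 1) Hev Hx0).
  assert (0 <= lam * x i0 ^ (m - 1)) by (rewrite <- eigen by auto; apply rsum_nonneg; auto).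
  destruct (Rtotal_order lam 0) as [Hl|[Hl|Hl]]; [nra | exfalso | lra].
  subst lam.
  assert (Hzero : forall i, (i < n)%nat -> u k0 i * dot n (u k0) x ^ (m - 1) = 0).
  { intros i Hi. apply (rsum_eq0_nonneg r (fun k => u k i * dot n (u k) x ^ (m - 1))); auto.
    rewrite eigen by auto. lra. }
  apply (pow_nonzero _ m Hd0).
  rewrite (pow_pred_mult _ m) by lia. unfold dot at 1.
  rewrite <- rsum_scal_r, <- (rsum_zero n). apply rsum_ext. intros i Hi.
  transitivity (u k0 i * dot n (u k0) x ^ (m - 1) * x i); [ring | rewrite Hzero; auto; ring].
Qed.

End RankOneEigen.

Lemma sdn_of_scp m n A : (2 <= m)%nat ->
  strongly_completely_positive m n A -> strongly_doubly_nonnegative m n A.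
Proof.
  intros hm [r [u [Hu [HA Hspan]]]]. split.
  - intros idx Hv. rewrite HA by auto. apply rsum_nonneg. intros k Hk.
    apply rprod_nonneg. destruct Hv as [_ Hf].
    eapply Forall_impl; [|exact Hf]. intros i Hi. apply Hu; auto.
  - intros lam [x [[i0 [Hi0 Hx0]] Heig]].
    assert (eigen : forall i, (i < n)%nat ->
              rsum r (fun k => u k i * dot n (u k) x ^ (m - 1)) = lam * x i ^ (m - 1)).
    { intros i Hi. rewrite <- Heig, (tensor_apply_rank_one_sum m n A r u) by (auto; lia).
      reflexivity. }
    destruct (spanning_dot_neq0 n r u x i0 Hspan Hi0 Hx0) as [k0 [Hk0 Hd0]].
    destruct (Nat.Even_or_Odd m).
    + apply (rank_one_eigen_pos_even m n r u x lam hm eigen i0 k0); auto.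
    + apply (rank_one_eigen_pos_odd m n r u x lam hm eigen i0 k0); auto.
Qed.

(** * Coinciding generators give the H-eigenvalue 0 *)

(* For x = e_i - e_j, every nonvanishing product x_i2 ... x_im only involves indices
   with the common value c_i = c_j, so the entry in front of it is constant while the
   entries of x sum to 0. *)
Lemma cauchy_distinct_of_sdn m n c : (2 <= m)%nat ->
  strongly_doubly_nonnegative m n (cauchy_tensor c) ->
  forall i j, (i < n)%nat -> (j < n)%nat -> i <> j -> c i <> c j.
Proof.
  intros hm [_ Hev] i j Hi Hj Hij Hc.
  set (x t := unit_vec i t - unit_vec j t).
  enough (H0 : H_eigenvalue m n (cauchy_tensor c) 0) by (pose proof (Hev 0 H0); lra).
  exists x. split.
  - exists i. split; auto. unfold x, unit_vec. rewrite Nat.eqb_refl.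
    destruct (Nat.eqb_spec j i); [lia | lra].
  - intros k Hk. rewrite Rmult_0_l. unfold tensor_apply.
    rewrite (sum_tuples_ext n (m - 1) _ (fun l => / (c k + INR (m - 1) * c i) * rprod x l)).
    + rewrite sum_tuples_scal, sum_tuples_rprod.
      assert (Hs : rsum n x = 0).
      { unfold x. rewrite rsum_minus.
        rewrite (rsum_ext n (unit_vec i) (fun t => 1 * unit_vec i t)) by (intros; lra).
        rewrite (rsum_ext n (unit_vec j) (fun t => 1 * unit_vec j t)) by (intros; lra).
        rewrite !rsum_unit_vec by auto. lra. }
      rewrite Hs, pow_i by lia. lra.
    + intros l Hl Hf. destruct (Req_dec (rprod x l) 0) as [E|E]; [rewrite E; lra|].
      change (cauchy_tensor c (k :: l)) with (/ (c k + index_sum c l)).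
      rewrite (index_sum_const c (c i) l), Hl; [reflexivity|].
      intros t Ht. pose proof (rprod_neq0_In x l t E Ht) as Hx.
      unfold x, unit_vec in Hx.
      destruct (Nat.eqb_spec i t) as [<-|]; [reflexivity|].
      destruct (Nat.eqb_spec j t) as [<-|]; [auto | lra].
Qed.

(** * Zeros of exponential sums *)

Definition exp_poly (p : nat) (l e : nat -> R) (z : R) : R := rsum p (fun i => l i * exp (e i * z)).

Lemma exp_poly_derive p l e z :
  derivable_pt_lim (exp_poly p l e) z (exp_poly p (fun i => l i * e i) e z).
Proof.
  induction p.
  - apply derivable_pt_lim_const.
  - apply (derivable_pt_lim_ext (fun y => exp_poly p l e y + l p * exp (e p * y))).
    { intros y. unfold exp_poly. rewrite rsum_S. reflexivity. }
    unfold exp_poly at 2. rewrite rsum_S. apply derivable_pt_lim_plus; [exact IHp|].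
    replace (l p * e p * exp (e p * z)) with (l p * (exp (e p * z) * (e p * 1))) by ring.
    apply derivable_pt_lim_scal, (derivable_pt_lim_comp (mult_real_fct (e p) id) exp).
    + apply derivable_pt_lim_scal, derivable_pt_lim_id.
    + apply derivable_pt_lim_exp.
Qed.

Lemma rolle_lim f f' a b : a < b -> (forall x, derivable_pt_lim f x (f' x)) ->
  f a = 0 -> f b = 0 -> exists w, a < w < b /\ f' w = 0.
Proof.
  intros Hab Hd Ha Hb. destruct (MVT_cor2 f f' a b Hab) as [w [Hw1 Hw2]]; [auto|].
  exists w. split; [exact Hw2|]. rewrite Ha, Hb in Hw1.
  destruct (Rmult_integral (f' w) (b - a)); [lra | auto | lra].
Qed.

Lemma nat_choice (P : nat -> R -> Prop) q :
  (forall j, (j < q)%nat -> exists w, P j w) ->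
  exists w : nat -> R, forall j, (j < q)%nat -> P j (w j).
Proof.
  intros H. apply (choice (fun j w => (j < q)%nat -> P j w)). intros j.
  destruct (Compare_dec.lt_dec j q) as [Hj|Hj].
  - destruct (H j Hj) as [w Hw]. exists w. auto.
  - exists 0. intros. lia.
Qed.

(* Descartes' rule of signs for exponential sums, in the weak form that an
   exponential sum with p distinct exponents has at most p - 1 real zeros:
   after factoring out exp (e_0 z) the constant term disappears under
   differentiation, and Rolle's theorem leaves p - 1 interlacing zeros. *)
Lemma exp_poly_zeros_coef0 p : forall (e l z : nat -> R),
  (forall i j, (i < p)%nat -> (j < p)%nat -> i <> j -> e i <> e j) ->
  (forall j, (S j < p)%nat -> z j < z (S j)) ->
  (forall j, (j < p)%nat -> exp_poly p l e (z j) = 0) ->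
  forall i, (i < p)%nat -> l i = 0.
Proof.
  induction p as [|q IH]; intros e l z He Hz Hf i Hi; [lia|].
  set (e' i := e (S i) - e 0%nat).
  set (g y := l 0%nat + exp_poly q (fun i => l (S i)) e' y).
  assert (Hg : forall y, g y = exp (- (e 0%nat * y)) * exp_poly (S q) l e y).
  { intros y. unfold g, exp_poly. rewrite rsum_shift, Rmult_plus_distr_l, <- rsum_scal_l.
    f_equal.
    - rewrite <- Rmult_assoc, (Rmult_comm _ (l 0%nat)), Rmult_assoc, <- exp_plus,
        Rplus_opp_l, exp_0. ring.
    - apply rsum_ext. intros k _. unfold e'.
      rewrite <- Rmult_assoc, (Rmult_comm _ (l (S k))), Rmult_assoc, <- exp_plus.
      do 2 f_equal. ring. }
  assert (Hg0 : forall j, (j < S q)%nat -> g (z j) = 0) by (intros; rewrite Hg, Hf by auto; ring).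
  assert (Hd : forall y, derivable_pt_lim g y (exp_poly q (fun i => l (S i) * e' i) e' y)).
  { intros y. unfold g. rewrite <- Rplus_0_l.
    apply derivable_pt_lim_plus; [apply derivable_pt_lim_const | apply exp_poly_derive]. }
  destruct (nat_choice (fun j w => z j < w < z (S j) /\
                          exp_poly q (fun i => l (S i) * e' i) e' w = 0) q) as [w Hw].
  { intros j Hj. apply rolle_lim with g; auto with arith. }
  assert (Hl' : forall i, (i < q)%nat -> l (S i) * e' i = 0).
  { apply (IH e' _ w).
    - intros a b Ha Hb Hab E. apply (He (S a) (S b)); try lia. unfold e' in E. lra.
    - intros j Hj. pose proof (Hw j ltac:(lia)). pose proof (Hw (S j) Hj). lra.
    - intros j Hj. apply Hw, Hj. }
  assert (Hl : forall i, (i < q)%nat -> l (S i) = 0).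
  { intros i' Hi'. destruct (Rmult_integral _ _ (Hl' i' Hi')) as [|E]; auto.
    exfalso. apply (He (S i') 0%nat); try lia. unfold e' in E. lra. }
  destruct i as [|i]; [|apply Hl; lia].
  pose proof (Hg0 0%nat ltac:(lia)) as G. unfold g, exp_poly in G.
  rewrite (rsum_ext q _ (fun _ => 0)), rsum_zero in G; [lra|].
  intros. rewrite Hl by auto. ring.
Qed.

(* Stated as a definition so that its statement is elaborated with the
   Stdlib notations, before MathComp is imported below. *)
Definition square_system_solvable : Prop := forall (p : nat) (f : nat -> nat -> R),
  (forall l : nat -> R, (forall j, (j < p)%nat -> rsum p (fun i => l i * f i j) = 0) ->
     forall i, (i < p)%nat -> l i = 0) ->
  forall b : nat -> R, exists g : nat -> R,
    forall i, (i < p)%nat -> rsum p (fun j => f i j * g j) = b i.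

Module MatrixSolve.
Import all_boot all_algebra Rstruct GRing.Theory.
Local Open Scope ring_scope.

Lemma rsum_big (p : nat) (F : nat -> R) : rsum p F = \sum_(j < p) F j.
Proof. by elim: p => [|p IH]; rewrite ?big_ord0 // big_ord_recr /= rsum_S IH. Qed.

Definition nat_fun {p : nat} (v : 'I_p -> R) (i : nat) : R :=
  if insub i is Some i' then v i' else 0.

Lemma nat_funE {p : nat} (v : 'I_p -> R) (i : 'I_p) : nat_fun v i = v i.
Proof. by rewrite /nat_fun valK. Qed.

Lemma square_system_solvableP : square_system_solvable.
Proof.
move=> p f Hker b.
pose A : 'M[R]_p := \matrix_(i < p, j < p) f i j.
have Hfree : row_free A.
  rewrite -kermx_eq0; apply/eqP/row_matrixP => k; rewrite row0.
  set v := row k (kermx A).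
  have Hv : v *m A = 0 by rewrite /v -row_mul mulmx_ker row0.
  apply/rowP => j; rewrite [RHS]mxE -(nat_funE (v 0)).
  apply: (Hker (nat_fun (v 0))); last exact/ltP/ltn_ord.
  move=> j' /ltP hj'.
  transitivity ((v *m A) 0 (Ordinal hj')); last by rewrite Hv mxE.
  by rewrite mxE rsum_big; apply: eq_bigr => i _; rewrite nat_funE !mxE.
have HA : A \in unitmx by rewrite -row_free_unit.
pose g := invmx A *m \col_(i < p) b i.
exists (nat_fun (fun j => g j 0)) => i /ltP hi.
transitivity ((A *m g) (Ordinal hi) 0); last by rewrite mulmxA mulmxV // mul1mx mxE.
by rewrite mxE rsum_big; apply: eq_bigr => j _; rewrite nat_funE !mxE.
Qed.

End MatrixSolve.

Lemma square_system_solve_bounded p (f : nat -> nat -> R) :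
  (forall l : nat -> R, (forall j, (j < p)%nat -> rsum p (fun i => l i * f i j) = 0) ->
     forall i, (i < p)%nat -> l i = 0) ->
  exists L, 0 < L /\ forall (b : nat -> R) eps,
    (forall t, (t < p)%nat -> Rabs (b t) <= eps) ->
    exists g : nat -> R, (forall i, (i < p)%nat -> rsum p (fun j => f i j * g j) = b i) /\
      (forall j, (j < p)%nat -> Rabs (g j) <= L * eps).
Proof.
  intros Hker.
  destruct (choice (fun t (G : nat -> R) => forall i, (i < p)%nat ->
              rsum p (fun j => f i j * G j) = unit_vec t i)) as [G HG].
  { intros t. apply (MatrixSolve.square_system_solvableP p f Hker). }
  (* the solution for b is the combination sum_t b_t G_t of the solutions for the unit vectors *)
  set (S0 := rsum p (fun j => rsum p (fun t => Rabs (G t j)))).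
  assert (HS0 : 0 <= S0) by (apply rsum_nonneg; intros; apply rsum_nonneg; intros; apply Rabs_pos).
  exists (1 + S0). split; [lra|]. intros b eps Hb.
  exists (fun j => rsum p (fun t => b t * G t j)). split.
  - intros i Hi.
    rewrite (rsum_ext p _ (fun j => rsum p (fun t => b t * (f i j * G t j)))).
    + rewrite rsum_exchange, <- (rsum_unit_vec p b i Hi). apply rsum_ext. intros t _.
      rewrite rsum_scal_l, HG by auto. unfold unit_vec.
      destruct (Nat.eqb_spec t i), (Nat.eqb_spec i t); subst; try lia; reflexivity.
    + intros j _. rewrite <- rsum_scal_l. apply rsum_ext. intros. ring.
  - intros j Hj.
    assert (Heps : 0 <= eps) by (eapply Rle_trans; [apply Rabs_pos | apply (Hb j Hj)]).
    eapply Rle_trans; [apply rsum_abs|].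
    eapply Rle_trans; [apply (rsum_le p _ (fun t => eps * Rabs (G t j)))|].
    { intros t Ht. rewrite Rabs_mult. apply Rmult_le_compat_r; [apply Rabs_pos | auto]. }
    rewrite rsum_scal_l.
    assert (rsum p (fun t => Rabs (G t j)) <= S0).
    { apply (rsum_term_le p (fun j => rsum p (fun t => Rabs (G t j)))); auto.
      intros. apply rsum_nonneg. intros. apply Rabs_pos. }
    nra.
Qed.

(** * Exponential-sum representations of 1/s *)

(* int_a^(a+h) exp (s z) dz, for s <> 0 *)
Definition exp_integral (s a h : R) : R := (exp (s * (a + h)) - exp (s * a)) / s.

Definition exp_sum (s : R) (A : list (R * R)) : R :=
  fold_right Rplus 0 (map (fun wz => fst wz * exp (s * snd wz)) A).

Definition riemann_atoms (a h : R) (M : nat) : list (R * R) :=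
  map (fun k => (h / INR M, a + INR k * (h / INR M))) (seq 0 M).

Definition node (p j : nat) : R := INR j - INR p.

Lemma exp_sum_app s A B : exp_sum s (A ++ B) = exp_sum s A + exp_sum s B.
Proof. unfold exp_sum. rewrite map_app, fold_Rplus_app. reflexivity. Qed.

Lemma exp_sum_map_seq s (g : nat -> R * R) M :
  exp_sum s (map g (seq 0 M)) = rsum M (fun k => fst (g k) * exp (s * snd (g k))).
Proof. unfold exp_sum, rsum. rewrite map_map. reflexivity. Qed.

Lemma exp_sum_flat_map s (g : nat -> list (R * R)) p :
  exp_sum s (flat_map g (seq 0 p)) = rsum p (fun j => exp_sum s (g j)).
Proof.
  induction p; [reflexivity|].
  rewrite seq_S, flat_map_app, exp_sum_app, rsum_S, IHp. simpl. rewrite app_nil_r. reflexivity.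
Qed.

Lemma exp_sub_1_sub_le x : 0 <= x <= 1/2 -> exp x - 1 - x <= 2 * x ^ 2.
Proof.
  intros Hx. pose proof (exp_ineq1_le x). pose proof (exp_ineq1_le (- x)).
  assert (E : exp x * exp (- x) = 1) by (rewrite <- exp_plus, Rplus_opp_r; apply exp_0).
  pose proof (exp_pos (- x)).
  assert (exp x * (1 - x) <= 1)
    by (rewrite <- E; apply Rmult_le_compat_l; [pose proof (exp_pos x) |]; lra).
  nra.
Qed.

Lemma exp_integral_cell s b h : 0 < s -> 0 <= h -> s * h <= 1/2 -> b <= 0 ->
  0 <= exp_integral s b h - h * exp (s * b) <= 2 * s * h ^ 2.
Proof.
  intros Hs Hh Hsh Hb.
  replace (exp_integral s b h - h * exp (s * b)) with (exp (s * b) * (exp (s * h) - 1 - s * h) / s)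
    by (unfold exp_integral; rewrite Rmult_plus_distr_l, exp_plus; field; lra).
  pose proof (exp_sub_1_sub_le (s * h) ltac:(nra)). pose proof (exp_ineq1_le (s * h)).
  assert (Eb : 0 < exp (s * b) <= 1).
  { split; [apply exp_pos|]. rewrite <- exp_0.
    destruct (Req_dec (s * b) 0) as [->|]; [lra | left; apply exp_increasing; nra]. }
  split.
  - apply Rmult_le_pos; [nra | left; apply Rinv_0_lt_compat; auto].
  - apply (Rmult_le_reg_r s); auto. unfold Rdiv. rewrite Rmult_assoc, Rinv_l by lra. nra.
Qed.

Lemma exp_integral_riemann s a l M : 0 < s -> 0 <= l -> (1 <= M)%nat -> a + l <= 0 ->
  2 * s * l <= INR M ->
  0 <= exp_integral s a l - exp_sum s (riemann_atoms a l M) <= 2 * s * l ^ 2 / INR M.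
Proof.
  intros Hs Hl HM Hal Hstep.
  assert (HMr : 1 <= INR M) by (apply (le_INR 1); auto).
  set (h := l / INR M).
  assert (Hh : 0 <= h) by (apply Rmult_le_pos; [auto | left; apply Rinv_0_lt_compat; lra]).
  assert (HMh : INR M * h = l) by (unfold h; field; lra).
  assert (Hsplit : exp_integral s a l = rsum M (fun k => exp_integral s (a + INR k * h) h)).
  { unfold exp_integral.
    rewrite (rsum_ext M _ (fun k => exp (s * (a + INR (S k) * h)) / s - exp (s * (a + INR k * h)) / s)).
    - rewrite (rsum_telescope M (fun k => exp (s * (a + INR k * h)) / s)), HMh. simpl.
      rewrite Rmult_0_l, Rplus_0_r. field. lra.
    - intros k _. rewrite S_INR. replace (a + (INR k + 1) * h) with (a + INR k * h + h) by ring.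
      field. lra. }
  unfold riemann_atoms. fold h. rewrite exp_sum_map_seq, Hsplit, <- rsum_minus. simpl.
  assert (Hk : forall k, (k < M)%nat ->
            0 <= exp_integral s (a + INR k * h) h - h * exp (s * (a + INR k * h)) <= 2 * s * h ^ 2).
  { intros k Hk. assert (INR k + 1 <= INR M) by (rewrite <- S_INR; apply le_INR; lia).
    apply exp_integral_cell; auto; unfold h in *.
    - apply (Rmult_le_reg_r (INR M)); [lra|].
      replace (s * (l / INR M) * INR M) with (s * l) by (field; lra). lra.
    - nra. }
  split; [apply rsum_nonneg; intros; apply Hk; auto|].
  eapply Rle_trans; [apply (rsum_le M _ (fun _ => 2 * s * h ^ 2)); intros; apply Hk; auto|].
  rewrite rsum_const, <- HMh. right. field. lra.
Qed.

(* 1/s = int_{-oo}^0 exp (s z) dz, split at -T - p < -p = node p 0 < node p 1 < ... < 0,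
   each [node p j, node p j + 1] being further split at node p j + d. *)
Lemma inv_split s p T d : 0 < s ->
  / s = exp (- s * (T + INR p)) / s + exp_integral s (- (T + INR p)) T
        + rsum p (fun j => exp_integral s (node p j) d + exp_integral s (node p j + d) (1 - d)).
Proof.
  intros Hs. unfold exp_integral.
  rewrite (rsum_ext p _ (fun j => exp (s * node p (S j)) / s - exp (s * node p j) / s)).
  - rewrite (rsum_telescope p (fun j => exp (s * node p j) / s)). unfold node.
    rewrite Rminus_diag, Rmult_0_r, exp_0. simpl.
    replace (- (T + INR p) + T) with (0 - INR p) by ring.
    replace (s * - (T + INR p)) with (- s * (T + INR p)) by ring. field. lra.
  - intros j _. unfold node. rewrite S_INR.
    replace (INR j - INR p + d + (1 - d)) with (INR j + 1 - INR p) by ring. field. lra.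
Qed.

Lemma exp_tail_le s T : 0 < s -> 0 < T -> 0 <= exp (- s * T) / s <= / (s ^ 2 * T).
Proof.
  intros Hs HT. pose proof (exp_ineq1_le (s * T)). pose proof (exp_pos (- s * T)).
  assert (E : exp (- s * T) * exp (s * T) = 1).
  { rewrite <- exp_plus. replace (- s * T + s * T) with 0 by ring. apply exp_0. }
  split; [apply Rmult_le_pos; [lra | left; apply Rinv_0_lt_compat; lra]|].
  assert (Hs2T : 0 < s ^ 2 * T) by (apply Rmult_lt_0_compat; [apply pow_lt|]; lra).
  apply (Rmult_le_reg_r (s ^ 2 * T)); [exact Hs2T|].
  rewrite Rinv_l by lra.
  replace (exp (- s * T) / s * (s ^ 2 * T)) with (exp (- s * T) * (s * T)) by (field; lra).
  assert (exp (- s * T) * (1 + s * T) <= exp (- s * T) * exp (s * T))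
    by (apply Rmult_le_compat_l; lra).
  lra.
Qed.

Definition inv_atoms (p T : nat) (d : R) (M : nat) : list (R * R) :=
  riemann_atoms (- (INR T + INR p)) (INR T) M
  ++ flat_map (fun j => riemann_atoms (node p j + d) (1 - d) M) (seq 0 p).

Lemma inv_atoms_pos p T d M : (1 <= T)%nat -> d < 1 -> (1 <= M)%nat ->
  forall wz, In wz (inv_atoms p T d M) -> 0 < fst wz.
Proof.
  intros HT Hd HM wz Hwz.
  assert (0 < INR T) by (apply lt_0_INR; lia). assert (0 < INR M) by (apply lt_0_INR; lia).
  apply in_app_or in Hwz as [Hwz|Hwz]; [|apply in_flat_map in Hwz as [j [_ Hwz]]];
    unfold riemann_atoms in Hwz; apply in_map_iff in Hwz as [k [<- _]]; simpl;
    apply Rdiv_lt_0_compat; lra.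
Qed.

Lemma node_le p j : (j < p)%nat -> node p j + 1 <= 0.
Proof. intros Hj. unfold node. pose proof (le_INR (S j) p Hj). rewrite S_INR in *. lra. Qed.

Lemma inv_atoms_error s p T d M : 0 < s -> 0 < d < 1 -> 2 * s * d <= 1 ->
  (1 <= T)%nat -> (1 <= M)%nat -> 2 * s * (INR T + 1) <= INR M ->
  0 <= / s - exp_sum s (inv_atoms p T d M) - rsum p (fun j => d * exp (s * node p j))
    <= / (s ^ 2 * INR T) + 2 * s * (INR T ^ 2 + INR p) / INR M + 2 * INR p * s * d ^ 2.
Proof.
  intros Hs Hd Hsd HT HM Hstep.
  assert (HTr : 1 <= INR T) by (apply (le_INR 1); auto).
  assert (HMr : 1 <= INR M) by (apply (le_INR 1); auto).
  set (cell j := exp_integral s (node p j) d - d * exp (s * node p j)).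
  set (seg j := exp_integral s (node p j + d) (1 - d)
                - exp_sum s (riemann_atoms (node p j + d) (1 - d) M)).
  set (seg0 := exp_integral s (- (INR T + INR p)) (INR T)
               - exp_sum s (riemann_atoms (- (INR T + INR p)) (INR T) M)).
  assert (E : / s - exp_sum s (inv_atoms p T d M) - rsum p (fun j => d * exp (s * node p j))
              = exp (- s * (INR T + INR p)) / s + seg0 + rsum p (fun j => cell j + seg j)).
  { rewrite (inv_split s p (INR T) d Hs) at 1. unfold inv_atoms.
    rewrite exp_sum_app, exp_sum_flat_map.
    rewrite (rsum_ext p (fun j => cell j + seg j)
      (fun j => (exp_integral s (node p j) d + exp_integral s (node p j + d) (1 - d))
                - (d * exp (s * node p j) + exp_sum s (riemann_atoms (node p j + d) (1 - d) M))))
      by (intros; unfold cell, seg; ring).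
    rewrite rsum_minus, !rsum_plus. unfold seg0. ring. }
  rewrite E.
  pose proof (pos_INR p).
  destruct (exp_tail_le s (INR T + INR p) Hs ltac:(lra)) as [Ht1 Ht2].
  assert (/ (s ^ 2 * (INR T + INR p)) <= / (s ^ 2 * INR T)).
  { apply Rinv_le_contravar; [apply Rmult_lt_0_compat; [apply pow_lt|]|
      apply Rmult_le_compat_l; [apply pow_le|]]; lra. }
  destruct (exp_integral_riemann s (- (INR T + INR p)) (INR T) M Hs ltac:(lra) HM ltac:(lra) ltac:(nra))
    as [H01 H02].
  assert (Hj : forall j, (j < p)%nat -> 0 <= cell j + seg j <= 2 * s * d ^ 2 + 2 * s / INR M).
  { intros j Hj. pose proof (node_le p j Hj).
    destruct (exp_integral_cell s (node p j) d Hs ltac:(lra) ltac:(lra) ltac:(lra)) as [C1 C2].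
    destruct (exp_integral_riemann s (node p j + d) (1 - d) M Hs ltac:(lra) HM ltac:(lra) ltac:(nra))
      as [S1 S2].
    assert (2 * s * (1 - d) ^ 2 / INR M <= 2 * s / INR M).
    { apply Rmult_le_compat_r; [left; apply Rinv_0_lt_compat; lra|]. simpl. nra. }
    unfold cell, seg. lra. }
  assert (0 <= rsum p (fun j => cell j + seg j) <= INR p * (2 * s * d ^ 2 + 2 * s / INR M)).
  { split; [apply rsum_nonneg; intros; apply Hj; auto|].
    rewrite <- rsum_const. apply rsum_le. intros. apply Hj. auto. }
  assert (2 * s * INR T ^ 2 / INR M + INR p * (2 * s / INR M) = 2 * s * (INR T ^ 2 + INR p) / INR M)
    by (field; lra).
  unfold seg0. nra.
Qed.

Lemma inv_riemann_approx p smin smax d delta :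
  0 < smin <= smax -> 0 < d < 1 -> 2 * smax * d <= 1 -> 0 < delta ->
  exists A, (forall wz, In wz A -> 0 < fst wz) /\
    forall s, smin <= s <= smax ->
      0 <= / s - exp_sum s A - rsum p (fun j => d * exp (s * node p j))
        <= 2 * INR p * smax * d ^ 2 + delta.
Proof.
  intros Hs Hd Hsd Hdelta. pose proof (pos_INR p).
  assert (Hsm : 0 < smin ^ 2 * delta) by (apply Rmult_lt_0_compat; [apply pow_lt|]; lra).
  destruct (INR_unbounded (2 / (smin ^ 2 * delta))) as [T HT].
  assert (HT2 : 2 < INR T * (smin ^ 2 * delta)).
  { apply (Rmult_lt_compat_r (smin ^ 2 * delta)) in HT; [|exact Hsm].
    unfold Rdiv in HT. rewrite Rmult_assoc, Rinv_l in HT; lra. }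
  assert (HT1 : (1 <= T)%nat) by (destruct T; [simpl in HT2; lra | lia]).
  assert (HTr : 1 <= INR T) by (apply (le_INR 1); auto).
  set (X := 4 * smax * (INR T ^ 2 + INR p) / delta).
  assert (HX : 0 <= X) by
    (apply Rmult_le_pos; [pose proof (pow2_ge_0 (INR T)); nra | left; apply Rinv_0_lt_compat; lra]).
  assert (HY : 0 < 2 * smax * (INR T + 1)) by (apply Rmult_lt_0_compat; lra).
  destruct (INR_unbounded (X + 2 * smax * (INR T + 1))) as [M HM].
  assert (HMd : 4 * smax * (INR T ^ 2 + INR p) <= delta * INR M).
  { replace (4 * smax * (INR T ^ 2 + INR p)) with (delta * X) by (unfold X; field; lra).
    apply Rmult_le_compat_l; lra. }
  assert (HM1 : (1 <= M)%nat) by (destruct M; [simpl in HM; lra | lia]).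
  assert (HMr : 1 <= INR M) by (apply (le_INR 1); auto).
  exists (inv_atoms p T d M). split; [apply inv_atoms_pos; auto; lra|].
  intros s Hs'.
  destruct (inv_atoms_error s p T d M) as [E1 E2]; auto; try lra; [nra|nra|].
  split; [exact E1|].
  assert (Htail : / (s ^ 2 * INR T) <= delta / 2).
  { assert (smin ^ 2 <= s ^ 2) by (apply pow_incr; lra).
    assert (smin ^ 2 * delta * INR T <= s ^ 2 * delta * INR T)
      by (apply Rmult_le_compat_r; [lra | apply Rmult_le_compat_r; lra]).
    replace (delta / 2) with (/ (2 / delta)) by (field; lra).
    apply Rinv_le_contravar; [apply Rdiv_lt_0_compat; lra|].
    apply (Rmult_le_reg_r delta); [lra|].
    replace (2 / delta * delta) with 2 by (field; lra). nra. }
  assert (Hdisc : 2 * s * (INR T ^ 2 + INR p) / INR M <= delta / 2).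
  { apply (Rmult_le_reg_r (INR M)); [lra|].
    replace (2 * s * (INR T ^ 2 + INR p) / INR M * INR M) with (2 * s * (INR T ^ 2 + INR p))
      by (field; lra).
    pose proof (pow2_ge_0 (INR T)). nra. }
  assert (2 * INR p * s * d ^ 2 <= 2 * INR p * smax * d ^ 2)
    by (pose proof (pow2_ge_0 d); apply Rmult_le_compat_r; [lra | nra]).
  lra.
Qed.

Lemma pos_bounds n (c : nat -> R) : (forall i, (i < n)%nat -> 0 < c i) ->
  exists a b, 0 < a <= b /\ forall i, (i < n)%nat -> a <= c i <= b.
Proof.
  induction n as [|n IH]; intros hc; [exists 1, 1; split; [lra | intros; lia]|].
  destruct IH as [a [b [Ha Hab]]]; [intros; apply hc; lia|].
  exists (Rmin a (c n)), (Rmax b (c n)). pose proof (hc n ltac:(lia)).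
  pose proof (Rmin_l a (c n)). pose proof (Rmin_r a (c n)).
  pose proof (Rmax_l b (c n)). pose proof (Rmax_r b (c n)).
  split; [split; [apply Rmin_pos|]; lra|].
  intros i Hi. destruct (Nat.eq_dec i n) as [->|]; [lra|].
  pose proof (Hab i ltac:(lia)). lra.
Qed.

Lemma exp_node_kernel q p (e : nat -> R) :
  (forall i j, (i < p)%nat -> (j < p)%nat -> i <> j -> e i <> e j) ->
  forall l : nat -> R, (forall j, (j < p)%nat -> rsum p (fun i => l i * exp (e i * node q j)) = 0) ->
  forall i, (i < p)%nat -> l i = 0.
Proof.
  intros He l Hl. apply (exp_poly_zeros_coef0 p e l (node q) He); [|exact Hl].
  intros j _. unfold node. rewrite S_INR. lra.
Qed.

Lemma gap_width p smax L : 0 < smax -> 0 < L ->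
  exists d, 0 < d < 1 /\ 2 * smax * d <= 1 /\
    2 * INR p * smax * d ^ 2 + d / (4 * (L + 1)) <= d / (2 * (L + 1)).
Proof.
  intros Hs HL. pose proof (pos_INR p).
  set (K := 8 * ((smax + 1) * (INR p + 1)) * (L + 1)).
  assert (Hps : INR p * smax <= (smax + 1) * (INR p + 1)) by nra.
  assert (HK1 : 8 * (smax + 1) <= K).
  { unfold K. replace (8 * (smax + 1)) with (8 * ((smax + 1) * 1) * 1) by ring.
    apply Rmult_le_compat; try lra. apply Rmult_le_compat_l; [lra|].
    apply Rmult_le_compat_l; lra. }
  assert (HK2 : 8 * (INR p * smax) * (L + 1) <= K) by (unfold K; apply Rmult_le_compat_r; lra).
  exists (/ K). set (d := / K).
  assert (Hd0 : 0 < d) by (apply Rinv_0_lt_compat; lra).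
  assert (HdK : d * K = 1) by (apply Rinv_l; lra).
  split; [split; nra | split; [nra|]].
  assert (2 * INR p * smax * d ^ 2 * (4 * (L + 1)) <= d) by nra.
  apply (Rmult_le_reg_r (4 * (L + 1))); [lra|].
  replace ((2 * INR p * smax * d ^ 2 + d / (4 * (L + 1))) * (4 * (L + 1)))
    with (2 * INR p * smax * d ^ 2 * (4 * (L + 1)) + d) by (field; lra).
  replace (d / (2 * (L + 1)) * (4 * (L + 1))) with (2 * d) by (field; lra). lra.
Qed.

Theorem inv_exp_sum_repr p (e : nat -> R) :
  (forall i, (i < p)%nat -> 0 < e i) ->
  (forall i j, (i < p)%nat -> (j < p)%nat -> i <> j -> e i <> e j) ->
  exists (A : list (R * R)) (W : nat -> R),
    (forall wz, In wz A -> 0 < fst wz) /\ (forall j, (j < p)%nat -> 0 < W j) /\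
    forall i, (i < p)%nat -> / e i = exp_sum (e i) A + rsum p (fun j => W j * exp (e i * node p j)).
Proof.
  intros Hpos Hdist.
  destruct (pos_bounds p e Hpos) as [smin [smax [Hs He]]].
  destruct (square_system_solve_bounded p _ (exp_node_kernel p p e Hdist)) as [L [HL Hsolve]].
  destruct (gap_width p smax L) as [d [Hd [Hsd Hgap]]]; [lra | exact HL|].
  set (delta := d / (4 * (L + 1))).
  set (eps := d / (2 * (L + 1))).
  destruct (inv_riemann_approx p smin smax d delta) as [A [HA Happrox]]; auto;
    [unfold delta; apply Rdiv_lt_0_compat; lra|].
  set (res i := / e i - exp_sum (e i) A - rsum p (fun j => d * exp (e i * node p j))).
  destruct (Hsolve res eps) as [g [Hg Hgb]].
  { intros t Ht. destruct (Happrox (e t) (He t Ht)) as [R1 R2].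
    unfold res. rewrite Rabs_right; unfold eps, delta in *; lra. }
  exists A, (fun j => d + g j). split; [exact HA | split].
  - intros j Hj. pose proof (Hgb j Hj). pose proof (Rle_abs (- g j)). rewrite Rabs_Ropp in *.
    assert (L * eps < d) by (unfold eps; apply (Rmult_lt_reg_r (2 * (L + 1))); [lra|];
      replace (L * (d / (2 * (L + 1))) * (2 * (L + 1))) with (L * d) by (field; lra); nra).
    lra.
  - intros i Hi.
    rewrite (rsum_ext p _ (fun j => d * exp (e i * node p j) + exp (e i * node p j) * g j))
      by (intros; ring).
    rewrite rsum_plus, Hg by auto. unfold res. ring.
Qed.

(** * Distinct generators give a strongly completely positive tensor *)

Fixpoint tuples (n k : nat) : list (list nat) :=
  match k with
  | O => [[]]
  | S k' => flat_map (fun j => map (cons j) (tuples n k')) (seq 0 n)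
  end.

Lemma In_tuples n k l : In l (tuples n k) <-> valid_index k n l.
Proof.
  revert l; induction k as [|k IH]; intros l; simpl.
  - split; [intros [<-|[]]; split; auto | intros [Hl _]; destruct l; simpl in *; auto; lia].
  - rewrite in_flat_map. split.
    + intros [x [Hx H]]. apply in_map_iff in H as [l' [<- H]]. apply in_seq in Hx.
      apply IH in H as [Hl Hf]. split; [simpl; lia | constructor; auto; lia].
    + intros [Hl Hf]. destruct l as [|x l]; simpl in Hl; [lia|]. inversion Hf; subst.
      exists x. split; [apply in_seq; lia|]. apply in_map, IH. split; auto.
Qed.

Lemma index_sum_pos n (c : nat -> R) l : (forall i, (i < n)%nat -> 0 < c i) ->
  Forall (fun i => (i < n)%nat) l -> l <> [] -> 0 < index_sum c l.
Proof.
  intros hc Hf. unfold index_sum. induction Hf as [|x l Hx Hf IH]; intros Hne; [easy|].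
  simpl. pose proof (hc x Hx). destruct l; [simpl; lra|].
  pose proof (IH ltac:(discriminate)). lra.
Qed.

(* The diagonal denominators m c_i are among them and pairwise distinct, whence n <= p. *)
Lemma cauchy_denominators m n (c : nat -> R) : (1 <= m)%nat ->
  (forall i, (i < n)%nat -> 0 < c i) ->
  (forall i j, (i < n)%nat -> (j < n)%nat -> i <> j -> c i <> c j) ->
  exists p (e : nat -> R), (n <= p)%nat /\ (forall i, (i < p)%nat -> 0 < e i) /\
    (forall i j, (i < p)%nat -> (j < p)%nat -> i <> j -> e i <> e j) /\
    forall idx, valid_index m n idx -> exists i, (i < p)%nat /\ e i = index_sum c idx.
Proof.
  intros hm hc hd.
  set (S := nodup Req_dec_T (map (index_sum c) (tuples n m))).
  assert (HS : forall v, In v S <-> exists idx, valid_index m n idx /\ v = index_sum c idx).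
  { intros v. unfold S. rewrite nodup_In, in_map_iff.
    split; intros [idx [H1 H2]]; exists idx; split; auto; apply In_tuples; auto. }
  exists (length S), (fun i => nth i S 0). split; [|split; [|split]].
  - rewrite <- (length_seq n 0), <- (length_map (fun i => INR m * c i)).
    apply NoDup_incl_length.
    + apply NoDup_map_NoDup_ForallPairs; [|apply seq_NoDup].
      intros x y Hx Hy E. apply in_seq in Hx, Hy.
      destruct (Nat.eq_dec x y); auto. exfalso. apply (hd x y); try lia.
      apply Rmult_eq_reg_l in E; auto. apply not_0_INR. lia.
    + intros v Hv. apply in_map_iff in Hv as [i [<- Hi]]. apply in_seq in Hi.
      apply HS. exists (repeat i m). split.
      * split; [apply repeat_length|]. apply Forall_forall. intros t Ht.
        apply repeat_spec in Ht. lia.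
      * rewrite (index_sum_const c (c i)), repeat_length; auto.
        intros t Ht. apply repeat_spec in Ht. subst. reflexivity.
  - intros i Hi. destruct (proj1 (HS _) (nth_In S 0 Hi)) as [idx [[Hl Hf] ->]].
    apply (index_sum_pos n); auto. intros ->. simpl in Hl. lia.
  - intros i j Hi Hj Hij E. apply Hij. eapply NoDup_nth; eauto. apply NoDup_nodup.
  - intros idx Hv. destruct (In_nth S (index_sum c idx) 0) as [i [Hi E]].
    + apply HS. eauto.
    + exists i. auto.
Qed.

(* The atom (w, z) yields the vector (w^(1/m) exp (c_i z))_i, whose m-th tensor power
   has entries w exp (z (c_i1 + ... + c_im)). *)
Definition atom_vec (m : nat) (c : nat -> R) (wz : R * R) (i : nat) : R :=
  exp (ln (fst wz) / INR m + c i * snd wz).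

Lemma rprod_exp_affine (c : nat -> R) a z l :
  rprod (fun t => exp (a + c t * z)) l = exp (INR (length l) * a + index_sum c l * z).
Proof.
  induction l as [|x l IH]; [unfold rprod, index_sum; simpl; rewrite <- exp_0; f_equal; ring|].
  change (length (x :: l)) with (S (length l)). rewrite S_INR.
  unfold rprod, index_sum in *. simpl. rewrite IH, <- exp_plus. f_equal. ring.
Qed.

Lemma rprod_atom_vec m c w z idx : (1 <= m)%nat -> 0 < w -> length idx = m ->
  rprod (atom_vec m c (w, z)) idx = w * exp (index_sum c idx * z).
Proof.
  intros hm Hw Hl. unfold atom_vec. simpl. rewrite rprod_exp_affine, Hl, exp_plus.
  assert (0 < INR m) by (apply lt_0_INR; lia).
  replace (INR m * (ln w / INR m)) with (ln w) by (field; lra). rewrite exp_ln; auto.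
Qed.

Lemma exp_sum_nth s F :
  exp_sum s F = rsum (length F) (fun k => fst (nth k F (1, 0)) * exp (s * snd (nth k F (1, 0)))).
Proof.
  induction F as [|wz F IH]; [reflexivity|].
  change (exp_sum s (wz :: F)) with (fst wz * exp (s * snd wz) + exp_sum s F).
  simpl length. rewrite rsum_shift, IH. reflexivity.
Qed.

Lemma atoms_rank_one_decomp m n c F : (1 <= m)%nat -> (forall wz, In wz F -> 0 < fst wz) ->
  forall idx, valid_index m n idx ->
  exp_sum (index_sum c idx) F = rsum (length F) (fun k => rprod (atom_vec m c (nth k F (1, 0))) idx).
Proof.
  intros hm HF idx [Hl _]. rewrite exp_sum_nth. apply rsum_ext. intros k Hk.
  assert (Hw : 0 < fst (nth k F (1, 0))) by (apply HF, nth_In, Hk).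
  destruct (nth k F (1, 0)) as [w z]. simpl in *. rewrite rprod_atom_vec by auto; ring.
Qed.

Lemma nth_app_nodes A (W : nat -> R) p j : (j < p)%nat ->
  nth (length A + j) (A ++ map (fun j => (W j, node p j)) (seq 0 p)) (1, 0) = (W j, node p j).
Proof.
  intros Hj. rewrite app_nth2, Nat.add_comm, Nat.add_sub by lia.
  rewrite (nth_indep _ _ (W 0%nat, node p 0%nat)) by (rewrite length_map, length_seq; lia).
  rewrite (map_nth (fun j => (W j, node p j))), seq_nth; auto.
Qed.

Lemma node_atoms_span m n p c A (W : nat -> R) : (n <= p)%nat ->
  (forall j, (j < p)%nat -> 0 < W j) ->
  (forall i j, (i < n)%nat -> (j < n)%nat -> i <> j -> c i <> c j) ->
  forall y : nat -> R, exists a : nat -> R, forall i, (i < n)%nat ->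
    y i = rsum (length A + p)
            (fun k => a k * atom_vec m c (nth k (A ++ map (fun j => (W j, node p j)) (seq 0 p)) (1, 0)) i).
Proof.
  intros Hnp HW hd y.
  destruct (MatrixSolve.square_system_solvableP n (fun i j => exp (c i * node p j))
              (exp_node_kernel p n c hd) y) as [g Hg].
  exists (fun k => if andb (Nat.leb (length A) k) (Nat.ltb (k - length A) n)
                   then g (k - length A)%nat / exp (ln (W (k - length A)%nat) / INR m) else 0).
  intros i Hi. rewrite <- Hg by auto.
  replace (length A + p)%nat with (length A + (n + (p - n)))%nat by lia.
  rewrite !rsum_app, (rsum_ext (length A) _ (fun _ => 0)), (rsum_ext (p - n) _ (fun _ => 0)),
    !rsum_zero, Rplus_0_l, Rplus_0_r.
  - apply rsum_ext. intros j Hj.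
    replace (Nat.leb (length A) (length A + j)) with true by (symmetry; apply Nat.leb_le; lia).
    replace (length A + j - length A)%nat with j by lia.
    replace (Nat.ltb j n) with true by (symmetry; apply Nat.ltb_lt; lia).
    rewrite nth_app_nodes by lia. unfold atom_vec. simpl. rewrite exp_plus.
    field. apply Rgt_not_eq, exp_pos.
  - intros j Hj.
    replace (Nat.leb (length A) (length A + (n + j))) with true by (symmetry; apply Nat.leb_le; lia).
    replace (Nat.ltb (length A + (n + j) - length A) n) with false by (symmetry; apply Nat.ltb_ge; lia).
    simpl. ring.
  - intros k Hk. replace (Nat.leb (length A) k) with false by (symmetry; apply Nat.leb_gt; lia).
    simpl. ring.
Qed.

Lemma cauchy_scp_of_distinct m n c : (1 <= m)%nat -> (forall i, (i < n)%nat -> 0 < c i) ->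
  (forall i j, (i < n)%nat -> (j < n)%nat -> i <> j -> c i <> c j) ->
  strongly_completely_positive m n (cauchy_tensor c).
Proof.
  intros hm hc hd.
  destruct (cauchy_denominators m n c) as [p [e [Hnp [He [Hed Hidx]]]]]; auto.
  destruct (inv_exp_sum_repr p e He Hed) as [A [W [HA [HW Hrepr]]]].
  set (F := A ++ map (fun j => (W j, node p j)) (seq 0 p)).
  assert (HF : forall wz, In wz F -> 0 < fst wz).
  { intros wz Hwz. apply in_app_or in Hwz as [Hwz|Hwz]; [auto|].
    apply in_map_iff in Hwz as [j [<- Hj]]. apply in_seq in Hj. apply HW. lia. }
  exists (length F), (fun k => atom_vec m c (nth k F (1, 0))). split; [|split].
  - intros. left. apply exp_pos.
  - intros idx Hv. destruct (Hidx idx Hv) as [i [Hi Ei]].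
    change (cauchy_tensor c idx) with (/ index_sum c idx).
    rewrite <- (atoms_rank_one_decomp m n c F hm HF idx Hv), <- Ei, Hrepr by auto.
    unfold F. rewrite exp_sum_app, exp_sum_map_seq. reflexivity.
  - unfold F. rewrite length_app, length_map, length_seq. apply node_atoms_span; auto.
Qed.

Theorem mainTheorem18 (m n : nat) (c : nat -> R)
  (hm : (2 <= m)%nat)
  (hc : forall i, (i < n)%nat -> 0 < c i) :
  ((forall i j, (i < n)%nat -> (j < n)%nat -> i <> j -> c i <> c j)
     <-> strongly_doubly_nonnegative m n (cauchy_tensor c))
  /\
  (strongly_doubly_nonnegative m n (cauchy_tensor c)
     <-> strongly_completely_positive m n (cauchy_tensor c)).
Proof.
  pose proof (sdn_of_scp m n (cauchy_tensor c) hm).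
  pose proof (cauchy_distinct_of_sdn m n c hm).
  pose proof (cauchy_scp_of_distinct m n c ltac:(lia) hc).
  tauto.
Qed.
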